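(* Let $\Gamma$ be a connected graph and let $\rho,\sigma$ be equivalent frameworks of the cone graph $\Gamma*\{c\}$ in $\mathbb M^{d+1}$, with $\rho$ in general position. If $\rho$ is upper coned, then $\sigma$ is either upper coned or lower coned.
   Context: Minkowski space $\mathbb M^{d+1}$ is $\mathbb R^{d+1}$ with squared length $|x|^2=-x_1^2+\sum_{i=2}^{d+1}x_i^2$. The cone graph $\Gamma*\{c\}$ adds a new vertex $c$ to $\Gamma$ joined by an edge to every vertex of $\Gamma$. Frameworks are equivalent if $|\rho(t)-\rho(u)|^2=|\sigma(t)-\sigma(u)|^2$ for all edges. General position means every set of at most $d+2$ of the points is affinely independent. $\rho$ is upper coned if for all $t\in\mathcal V(\Gamma)$, $|\rho(t)-\rho(c)|^2<0$ and $(\rho(t)-\rho(c))_1>0$; lower coned if $|\rho(t)-\rho(c)|^2<0$ and $(\rho(t)-\rho(c))_1<0$ for all $t\in\mathcal V(\Gamma)$. *)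

From HB Require Import structures.
From mathcomp Require Import all_boot all_order all_algebra.
Set Implicit Arguments. Unset Strict Implicit. Unset Printing Implicit Defensive.
Import Order.TTheory GRing.Theory Num.Theory.
Local Open Scope ring_scope.

(* Minkowski space M^{d+1}: row vectors of length d+1; coordinate ord0 is
   the time coordinate x_1. |x|^2 = -x_1^2 + sum_{i>=2} x_i^2. *)
Definition mink (R : rcfType) (d : nat) (x : 'rV[R]_(d.+1)) : R :=
  - (x 0 ord0) ^+ 2 + \sum_(i < d) (x 0 (lift ord0 i)) ^+ 2.

Definition tcoord (R : rcfType) (d : nat) (x : 'rV[R]_(d.+1)) : R := x 0 ord0.

Definition simple_graph (T : finType) (e : rel T) : Prop :=
  symmetric e /\ irreflexive e.
Definition connected_graph (T : finType) (e : rel T) : Prop :=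
  forall x y : T, connect e x y.

(* Cone graph Gamma * {c}: vertex set option T, with c = None. *)
Definition cone_edge (T : finType) (e : rel T) : rel (option T) :=
  fun u v => match u, v with
             | Some x, Some y => e x y
             | Some _, None | None, Some _ => true
             | None, None => false
             end.

Definition equivalent_fw (R : rcfType) (d : nat) (T : finType) (e : rel T)
  (rho sigma : option T -> 'rV[R]_(d.+1)) : Prop :=
  forall u v, cone_edge e u v -> mink (rho u - rho v) = mink (sigma u - sigma v).

Definition affinely_independent (R : rcfType) (d : nat) (V : finType)
  (rho : V -> 'rV[R]_(d.+1)) (S : {set V}) : Prop :=
  forall lam : V -> R,
    \sum_(s in S) lam s = 0 -> \sum_(s in S) lam s *: rho s = 0 ->
    forall s, s \in S -> lam s = 0.

Definition general_position (R : rcfType) (d : nat) (V : finType)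
  (rho : V -> 'rV[R]_(d.+1)) : Prop :=
  forall S : {set V}, (#|S| <= d.+2)%N -> affinely_independent rho S.

Definition upper_coned (R : rcfType) (d : nat) (T : finType)
  (rho : option T -> 'rV[R]_(d.+1)) : Prop :=
  forall t : T, mink (rho (Some t) - rho None) < 0 /\
                0 < tcoord (rho (Some t) - rho None).

Definition lower_coned (R : rcfType) (d : nat) (T : finType)
  (rho : option T -> 'rV[R]_(d.+1)) : Prop :=
  forall t : T, mink (rho (Some t) - rho None) < 0 /\
                tcoord (rho (Some t) - rho None) < 0.

From HB Require Import structures.
From mathcomp Require Import all_boot all_order all_algebra.
From mathcomp Require Import ring lra.
Set Implicit Arguments. Unset Strict Implicit. Unset Printing Implicit Defensive.
Import Order.TTheory GRing.Theory Num.Theory.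
Local Open Scope ring_scope.

(* Write v_t = rho(t) - rho(c) for the cone vectors of rho, and
   w_t = sigma(t) - sigma(c) for those of sigma.
   1. By polarization, the Minkowski inner product <v_t, v_u> is determined by
      the three squared lengths |v_t|^2, |v_u|^2 and |v_t - v_u|^2; for an
      edge tu of Gamma all three are edge lengths of the cone graph, so
      equivalence gives <w_t, w_u> = <v_t, v_u>, and also |w_t|^2 = |v_t|^2.
   2. (Reverse Cauchy-Schwarz.)  For timelike x, y the product
      x_1 y_1 <x, y> is negative: two timelike vectors have negative inner
      product exactly when they point to the same half of the light cone.
   3. Since rho is upper coned, all v_t are timelike and future pointing, so
      along every edge tu the timelike vectors w_t, w_u have the same time
      orientation.  Connectedness of Gamma propagates this to all vertices. *)

Section MinkowskiForm.
Variables (R : rcfType) (d : nat).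
Implicit Types x y : 'rV[R]_(d.+1).

Definition mink_form x y : R :=
  - (x 0 ord0 * y 0 ord0) + \sum_(i < d) x 0 (lift ord0 i) * y 0 (lift ord0 i).

Lemma mink_polar x y : mink (x - y) = mink x + mink y - 2 * mink_form x y.
Proof.
rewrite /mink /mink_form !mxE.
under eq_bigr => i _ do rewrite !mxE.
have -> : \sum_(i < d) (x 0 (lift ord0 i) - y 0 (lift ord0 i)) ^+ 2 =
  \sum_(i < d) x 0 (lift ord0 i) ^+ 2 + \sum_(i < d) y 0 (lift ord0 i) ^+ 2
  - 2 * \sum_(i < d) x 0 (lift ord0 i) * y 0 (lift ord0 i).
  by rewrite mulr_sumr -big_split -sumrB /=; apply: eq_bigr => i _; ring.
ring.
Qed.

(* The spatial
   part obeys 2 x_1 y_1 Sxy <= y_1^2 Sxx + x_1^2 Syy by Lagrange's identity,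
   and timelikeness gives Sxx < x_1^2, Syy < y_1^2. *)
Lemma timelike_form_sign x y : mink x < 0 -> mink y < 0 ->
  tcoord x * tcoord y * mink_form x y < 0.
Proof.
rewrite /mink /mink_form /tcoord.
set a := x 0 ord0; set b := y 0 ord0.
set U := \sum_(i < d) _ ^+ 2; set V := \sum_(i < d) _ ^+ 2.
set W := \sum_(i < d) _.
move=> hU hV.
have U_ge0 : 0 <= U by apply: sumr_ge0 => i _; exact: sqr_ge0.
have V_ge0 : 0 <= V by apply: sumr_ge0 => i _; exact: sqr_ge0.
have lagrange : 2 * a * b * W <= b ^+ 2 * U + a ^+ 2 * V.
  have -> : b ^+ 2 * U + a ^+ 2 * V = 2 * a * b * W +
      \sum_(i < d) (b * x 0 (lift ord0 i) - a * y 0 (lift ord0 i)) ^+ 2.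
    by rewrite /U /V /W !mulr_sumr -!big_split /=; apply: eq_bigr => i _; ring.
  by rewrite lerDl; apply: sumr_ge0 => i _; exact: sqr_ge0.
have spatial_x : 0 < b ^+ 2 * (a ^+ 2 - U) by apply: mulr_gt0; lra.
have spatial_y : 0 <= a ^+ 2 * (b ^+ 2 - V) by apply: mulr_ge0; lra.
nra.
Qed.

Lemma timelike_same_orientation x y : mink x < 0 -> mink y < 0 ->
  (0 < tcoord x * tcoord y) = (mink_form x y < 0).
Proof.
move=> hx hy; have hneg := timelike_form_sign hx hy.
by apply/idP/idP => h; nra.
Qed.

Lemma timelike_tcoord_neq0 x : mink x < 0 -> tcoord x != 0.
Proof.
move=> hx; have := timelike_form_sign hx hx.
by apply: contraTneq => ->; rewrite !mul0r ltxx.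
Qed.

End MinkowskiForm.

Definition cone_vec (R : rcfType) (d : nat) (T : finType)
  (f : option T -> 'rV[R]_(d.+1)) (t : T) : 'rV[R]_(d.+1) :=
  f (Some t) - f None.

Section EquivalentCones.
Variables (R : rcfType) (d : nat) (T : finType) (e : rel T).
Variables rho sigma : option T -> 'rV[R]_(d.+1).
Hypothesis equiv : equivalent_fw e rho sigma.

(* Every vertex of Gamma is joined to the cone vertex. *)
Lemma equiv_cone_mink t : mink (cone_vec sigma t) = mink (cone_vec rho t).
Proof. by rewrite /cone_vec equiv. Qed.

Lemma equiv_cone_form t u : e t u ->
  mink_form (cone_vec sigma t) (cone_vec sigma u) =
  mink_form (cone_vec rho t) (cone_vec rho u).
Proof.
move=> etu.
have polar (f : option T -> 'rV[R]_(d.+1)) :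
    2 * mink_form (cone_vec f t) (cone_vec f u) =
    mink (cone_vec f t) + mink (cone_vec f u) - mink (f (Some t) - f (Some u)).
  have -> : f (Some t) - f (Some u) = cone_vec f t - cone_vec f u.
    by rewrite /cone_vec opprB addrA addrNK.
  by rewrite mink_polar; ring.
have := polar sigma; rewrite !equiv_cone_mink -(equiv (u := Some t) (v := Some u)) //.
by rewrite -polar => h; lra.
Qed.

End EquivalentCones.

Lemma connected_constant_sign (R : realDomainType) (T : finType) (e : rel T)
  (f : T -> R) : connected_graph e -> (forall t, f t != 0) ->
  (forall t u, e t u -> 0 < f t * f u) ->
  (forall t, 0 < f t) \/ (forall t, f t < 0).
Proof.
move=> conn f_neq0 f_edge.
have pos_closed : closed e [pred t | 0 < f t].
  by move=> t u /f_edge ftu; rewrite !inE; apply/idP/idP => ft; nra.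
case: (pickP T) => [t0 _|T0]; last by left=> t; have := T0 t.
have same_sign t : (0 < f t0) = (0 < f t).
  by have := closed_connect pos_closed (conn t0 t); rewrite !inE.
case: (ltgtP (f t0) 0) (f_neq0 t0) => // ft0 _; [right|left] => t.
  by rewrite ltNge le_eqVlt -same_sign ltNge (ltW ft0) orbF eq_sym f_neq0.
by rewrite -same_sign.
Qed.

Theorem mainTheorem19 (R : rcfType) (d : nat) (T : finType) (e : rel T)
  (rho sigma : option T -> 'rV[R]_(d.+1)) :
  simple_graph e -> connected_graph e ->
  equivalent_fw e rho sigma ->
  general_position rho ->
  upper_coned rho ->
  upper_coned sigma \/ lower_coned sigma.
Proof.
move=> _ conn equiv _ up.
have rho_timelike t : mink (cone_vec rho t) < 0 by case: (up t).
have sigma_timelike t : mink (cone_vec sigma t) < 0.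
  by rewrite (equiv_cone_mink equiv).
have same_orientation t u : e t u ->
    0 < tcoord (cone_vec sigma t) * tcoord (cone_vec sigma u).
  move=> etu; rewrite timelike_same_orientation // (equiv_cone_form equiv etu).
  by rewrite -timelike_same_orientation //; apply: mulr_gt0; [case: (up t)|case: (up u)].
have [fut|past] := connected_constant_sign conn
  (fun t => timelike_tcoord_neq0 (sigma_timelike t)) same_orientation.
- by left=> t; split; [exact: sigma_timelike | exact: fut].
- by right=> t; split; [exact: sigma_timelike | exact: past].
Qed.
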